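(* Fix real parameters $a\neq 0$, $b>0$, $c>0$ and $0<\theta<c$, let $P(x,y)=\tfrac12+(x-y)\bigl(c-b(x+y)+axy\bigr)$, $\kappa=b/a$, $\zeta=\frac{b^2-a(c-\theta)}{a^2}$. For an opponent effort $y\ge 0$ with $ay<b$, let $$x^{BR}(y)=\frac{ay^2-(c-\theta)}{2(ay-b)}$$ denote the interior best response, i.e. the unique maximizer over $x\in\mathbb R$ of the strictly concave function $x\mapsto P(x,y)-\theta x$. Under empowerment ($a<0$) the condition $ay<b$ holds for every $y\ge 0$, and $x^{BR}$ is convex on $[0,\infty)$. Under suppression ($a>0$) the condition restricts $y$ to $[0,\kappa)$, and on $[0,\kappa)$ the function $x^{BR}$ is concave if $\zeta>0$ and convex if $\zeta<0$. The change of curvature occurs exactly at $\zeta=0$.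
   Context: $x^{BR}(y)$ is viewed as a function of the opponent's effort $y$; convexity/concavity refer to the sign of $d^2x^{BR}/dy^2$. *)

From Stdlib Require Import Reals.
From Coquelicot Require Import Coquelicot.
Open Scope R_scope.

Definition Pwin (a b c x y : R) : R :=
  1/2 + (x - y) * (c - b * (x + y) + a * x * y).

Definition payoff (a b c theta x y : R) : R := Pwin a b c x y - theta * x.

Definition kappa (a b : R) : R := b / a.

Definition zeta (a b c theta : R) : R := (b ^ 2 - a * (c - theta)) / a ^ 2.

Definition xBR (a b c theta y : R) : R :=
  (a * y ^ 2 - (c - theta)) / (2 * (a * y - b)).

(** The payoff is a quadratic in [x] with leading coefficient [a y - b], so
    [x^BR(y)] is its vertex.  Differentiating [x^BR] twice gives
    [zeta (a / (a y - b))^3]; the factor [a / (a y - b)] is positive under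
    empowerment (where moreover [zeta > 0]) and negative under suppression. *)
From Stdlib Require Import Reals Lra.
From Coquelicot Require Import Coquelicot.
Open Scope R_scope.

Lemma payoff_sub_xBR (a b c theta x y : R) : a * y <> b ->
  payoff a b c theta x y - payoff a b c theta (xBR a b c theta y) y =
  (a * y - b) * (x - xBR a b c theta y) ^ 2.
Proof.
intros Hy. unfold payoff, Pwin, xBR. field. lra.
Qed.

Lemma payoff_lt_xBR (a b c theta x y : R) : a * y < b -> x <> xBR a b c theta y ->
  payoff a b c theta x y < payoff a b c theta (xBR a b c theta y) y.
Proof.
intros Hy Hx.
assert (Hsq : 0 < (x - xBR a b c theta y) ^ 2).
{ apply pow2_gt_0. lra. }
pose proof (payoff_sub_xBR a b c theta x y ltac:(lra)). nra.
Qed.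

Lemma locally_mul_neq (a b y : R) : a * y <> b -> locally y (fun z => a * z <> b).
Proof.
apply (open_comp (fun z => a * z) (fun u => u <> b)).
- intros z _. apply (ex_derive_continuous (K := R_AbsRing) (V := R_NormedModule)).
  auto_derive. exact I.
- apply open_neq.
Qed.

Lemma is_derive_xBR (a b c theta z : R) : a * z <> b ->
  is_derive (xBR a b c theta) z (1/2 - (b ^ 2 - a * (c - theta)) / (2 * (a * z - b) ^ 2)).
Proof.
intros Hz. unfold xBR. auto_derive.
- lra.
- field. lra.
Qed.

Lemma is_derive_n_xBR_2 (a b c theta y : R) : a <> 0 -> a * y <> b ->
  is_derive_n (xBR a b c theta) 2 y (zeta a b c theta * (a / (a * y - b)) ^ 3).
Proof.
intros Ha Hy. simpl.
apply is_derive_ext_loc with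
  (f := fun z => 1/2 - (b ^ 2 - a * (c - theta)) / (2 * (a * z - b) ^ 2)).
- apply (filter_imp (fun z => a * z <> b)); [|exact (locally_mul_neq a b y Hy)].
  intros z Hz. symmetry. apply is_derive_unique, is_derive_xBR, Hz.
- unfold zeta. auto_derive.
  + intro E. apply Hy. nra.
  + field. split; [lra | exact Ha].
Qed.

Lemma xBR_second_derivative (a b c theta y : R) : a <> 0 -> a * y <> b ->
  ex_derive_n (xBR a b c theta) 2 y /\
  Derive_n (xBR a b c theta) 2 y = zeta a b c theta * (a / (a * y - b)) ^ 3.
Proof.
intros Ha Hy. pose proof (is_derive_n_xBR_2 a b c theta y Ha Hy) as D. split.
- eexists. exact D.
- exact (is_derive_n_unique _ _ _ _ D).
Qed.

Lemma zeta_pos_of_neg (a b c theta : R) : a < 0 -> theta < c -> 0 < zeta a b c theta.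
Proof.
intros Ha Htc. unfold zeta. apply Rdiv_lt_0_compat.
- pose proof (pow2_ge_0 b). nra.
- apply pow2_gt_0. lra.
Qed.

Lemma lt_kappa (a b y : R) : 0 < a -> (a * y < b <-> y < kappa a b).
Proof.
intros Ha. unfold kappa. rewrite <- Rlt_div_r by lra. rewrite Rmult_comm. reflexivity.
Qed.

Lemma Rdiv_neg_neg (p q : R) : p < 0 -> q < 0 -> 0 < p / q.
Proof.
intros Hp Hq. unfold Rdiv. pose proof (Rinv_lt_0_compat q Hq). nra.
Qed.

Lemma cube_neg (t : R) : t < 0 -> t ^ 3 < 0.
Proof.
intros Ht. replace (t ^ 3) with (t * t ^ 2) by ring.
apply Rmult_neg_pos; [exact Ht | apply pow2_gt_0; lra].
Qed.

Theorem corollary1 (a b c theta : R)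
  (ha : a <> 0) (hb : 0 < b) (hc : 0 < c) (ht0 : 0 < theta) (htc : theta < c) :
  (* x^BR(y) is the unique maximizer of x |-> P(x,y) - theta x when a y < b *)
  (forall y, 0 <= y -> a * y < b ->
     forall x, x <> xBR a b c theta y ->
       payoff a b c theta x y < payoff a b c theta (xBR a b c theta y) y) /\
  (* empowerment *)
  (a < 0 ->
     (forall y, 0 <= y -> a * y < b) /\
     (forall y, 0 <= y ->
        ex_derive_n (xBR a b c theta) 2 y /\ 0 < Derive_n (xBR a b c theta) 2 y)) /\
  (* suppression *)
  (0 < a ->
     (forall y, 0 <= y -> (a * y < b <-> y < kappa a b)) /\
     (0 < zeta a b c theta -> forall y, 0 <= y -> y < kappa a b ->
        ex_derive_n (xBR a b c theta) 2 y /\ Derive_n (xBR a b c theta) 2 y < 0) /\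
     (zeta a b c theta < 0 -> forall y, 0 <= y -> y < kappa a b ->
        ex_derive_n (xBR a b c theta) 2 y /\ 0 < Derive_n (xBR a b c theta) 2 y) /\
     (zeta a b c theta = 0 -> forall y, 0 <= y -> y < kappa a b ->
        ex_derive_n (xBR a b c theta) 2 y /\ Derive_n (xBR a b c theta) 2 y = 0)).
Proof.
split; [|split].
- intros y _ Hy x. apply payoff_lt_xBR, Hy.
- intros Ha. assert (Hab : forall y, 0 <= y -> a * y < b) by (intros; nra).
  split; [exact Hab|]. intros y Hy. specialize (Hab y Hy).
  destruct (xBR_second_derivative a b c theta y ha ltac:(lra)) as [Hex ->].
  split; [exact Hex|]. apply Rmult_lt_0_compat; [exact (zeta_pos_of_neg a b c theta Ha htc)|].
  apply pow_lt, Rdiv_neg_neg; lra.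
- intros Ha. split; [intros y _; exact (lt_kappa a b y Ha)|].
  assert (Hsd : forall y, y < kappa a b ->
    ex_derive_n (xBR a b c theta) 2 y /\
    Derive_n (xBR a b c theta) 2 y = zeta a b c theta * (a / (a * y - b)) ^ 3 /\
    (a / (a * y - b)) ^ 3 < 0).
  { intros y Hy. apply (lt_kappa a b y Ha) in Hy.
    destruct (xBR_second_derivative a b c theta y ha ltac:(lra)) as [Hex Heq].
    repeat split; [exact Hex | exact Heq |]. apply cube_neg, Rdiv_pos_neg; lra. }
  split; [|split]; intros Hz y _ Hy; destruct (Hsd y Hy) as (Hex & -> & Hneg);
    (split; [exact Hex|]).
  + apply Rmult_pos_neg; assumption.
  + nra.
  + rewrite Hz. ring.
Qed.
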